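(* Let $f$, $f^{-1}$ be as in the context, and let $\Phi$ be a finite set of materials, each given by a Young's modulus $E>0$ and a density $\rho>0$. Fix a design domain of length $L>0$, height $h>0$ and imposed thickness $t>0$, a load $F>0$ and a maximal allowed deflection $\delta_{\max}>0$, and assume $tE\delta_{\max}/F\ge f(1)$ for every material $(E,\rho)\in\Phi$. For a material $(E,\rho)$ the minimal mass of a design meeting the deflection constraint is $M(E,\rho)=L\,h\,t\,\rho\,f^{-1}\!\left(\frac{tE\delta_{\max}}{F}\right)$. Let $(E_1,\rho_1)\in\Phi$ be a material with the lowest ratio $\rho/E$ in $\Phi$, and let $(E_2,\rho_2)\in\Phi$ be the optimal material, i.e. the material whose mass $M(E_2,\rho_2)$ (equivalently, whose index $\rho_2 f^{-1}(tE_2\delta_{\max}/F)$) is strictly smaller than that of every other material of $\Phi$. Then $\rho_2\ge\rho_1$.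
   Context: For a volume fraction $V_f\in(0,1]$ (ratio of design volume to design-domain volume), $f(V_f)$ denotes the globally optimal compliance attainable by a design of volume fraction $V_f$ in the given compliance topology optimization problem, computed for unit load, unit thickness and unit Young's modulus (the compliance--volume fraction Pareto front); for general load, thickness and modulus the compliance is $f(V_f)F^2/(tE)$ and the deflection at the load point is $f(V_f)F/(tE)$. Standing assumptions on $f$: $f$ is differentiable on $(0,1]$ with $f'<0$, $f(V_f)\to+\infty$ as $V_f\searrow0$, so $f$ is a bijection $(0,1]\to[f(1),+\infty[$ with decreasing inverse $f^{-1}$; and the efficiency ratio $n(V_f)=-V_f f'(V_f)/f(V_f)$ satisfies $n(V_f)\le 1$ for all $V_f\in(0,1]$. *)

From Stdlib Require Import Reals Lra List.
Open Scope R_scope.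

Definition has_deriv_on01 (f : R -> R) (x d : R) : Prop :=
  forall eps : R, 0 < eps -> exists delta : R, 0 < delta /\
    forall y : R, 0 < y <= 1 -> y <> x -> Rabs (y - x) < delta ->
      Rabs ((f y - f x) / (y - x) - d) < eps.

Definition pareto_front (f fd finv : R -> R) : Prop :=
  (forall x, 0 < x <= 1 -> has_deriv_on01 f x (fd x)) /\
  (forall x, 0 < x <= 1 -> fd x < 0) /\
  (forall K : R, exists d : R, 0 < d /\ forall V, 0 < V < d -> K < f V) /\
  (forall y, f 1 <= y -> 0 < finv y <= 1 /\ f (finv y) = y) /\
  (forall x, 0 < x <= 1 -> - x * fd x / f x <= 1).

Definition min_mass (finv : R -> R) (L h t F dmax E rho : R) : R :=
  L * h * t * rho * finv (t * E * dmax / F).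

From Stdlib Require Import Reals List Lra Classical.
Open Scope R_scope.

(* Since n <= 1, the derivative f(V) (1 - n(V)) of V f(V) is nonnegative wherever
   f > 0, so V f(V) is nondecreasing and, f being decreasing, y f^-1(y) is
   nonincreasing.  Write y = tE dmax / F.  If rho2 < rho1, then rho1/E1 <= rho2/E2
   forces E2 < E1, i.e. y2 < y1, hence
     rho1 f^-1(y1) = (rho1/y1) (y1 f^-1(y1)) <= (rho2/y2) (y2 f^-1(y2)) = rho2 f^-1(y2),
   so material 1 is at least as light as material 2, against the strict
   optimality of material 2. *)

Definition slope (g : R -> R) (x y : R) : R := (g y - g x) / (y - x).

Definition punctured01 (x y : R) : Prop := 0 < y <= 1 /\ y <> x.

Lemma has_deriv_on01_limit g x d :
  has_deriv_on01 g x d <-> limit1_in (slope g x) (punctured01 x) d x.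
Proof.
  split; intros H eps Heps; destruct (H eps Heps) as [del [Hdel Hy]];
    exists del; split; auto.
  - intros y [[Hy01 Hyx] Hyd]. exact (Hy y Hy01 Hyx Hyd).
  - intros y Hy01 Hyx Hyd. exact (Hy y (conj (conj Hy01 Hyx) Hyd)).
Qed.

Lemma has_deriv_on01_continuous g x d : has_deriv_on01 g x d ->
  limit1_in g (punctured01 x) (g x) x.
Proof.
  intros Hg%has_deriv_on01_limit.
  assert (Hlim := limit_plus _ _ _ _ _ _ (limit_free (fun _ => g x) _ x x)
    (limit_mul _ _ _ _ _ _ Hg (limit_minus _ _ _ _ _ _ (lim_x _ x) (limit_free id _ x x)))).
  rewrite Rminus_diag, Rmult_0_r, Rplus_0_r in Hlim.
  apply (limit1_ext _ _ _ _ _) with (2 := Hlim).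
  intros y [_ Hyx]. unfold slope, id. field. lra.
Qed.

Lemma has_deriv_on01_id x : has_deriv_on01 (fun y => y) x 1.
Proof.
  apply has_deriv_on01_limit, (limit1_ext (fun _ => 1));
    [|exact (limit_free (fun _ => 1) _ x x)].
  intros y [_ Hyx]. unfold slope. field. lra.
Qed.

Lemma has_deriv_on01_const c x : has_deriv_on01 (fun _ => c) x 0.
Proof.
  apply has_deriv_on01_limit, (limit1_ext (fun _ => 0));
    [|exact (limit_free (fun _ => 0) _ x x)].
  intros y [_ Hyx]. unfold slope. field. lra.
Qed.

Lemma has_deriv_on01_opp g x d : has_deriv_on01 g x d ->
  has_deriv_on01 (fun y => - g y) x (- d).
Proof.
  intros Hg%has_deriv_on01_limit.
  apply has_deriv_on01_limit, (limit1_ext _ _ _ _ _) with (2 := limit_Ropp _ _ _ _ Hg).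
  intros y [_ Hyx]. unfold slope. field. lra.
Qed.

Lemma has_deriv_on01_plus g k x dg dk :
  has_deriv_on01 g x dg -> has_deriv_on01 k x dk ->
  has_deriv_on01 (fun y => g y + k y) x (dg + dk).
Proof.
  intros Hg%has_deriv_on01_limit Hk%has_deriv_on01_limit.
  apply has_deriv_on01_limit,
    (limit1_ext _ _ _ _ _) with (2 := limit_plus _ _ _ _ _ _ Hg Hk).
  intros y [_ Hyx]. unfold slope. field. lra.
Qed.

Lemma has_deriv_on01_mul g k x dg dk :
  has_deriv_on01 g x dg -> has_deriv_on01 k x dk ->
  has_deriv_on01 (fun y => g y * k y) x (dg * k x + g x * dk).
Proof.
  intros Hg Hk.
  assert (Hkc := has_deriv_on01_continuous _ _ _ Hk).
  apply has_deriv_on01_limit in Hg, Hk.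
  apply has_deriv_on01_limit, (limit1_ext _ _ _ _ _) with
    (2 := limit_plus _ _ _ _ _ _ (limit_mul _ _ _ _ _ _ Hg Hkc)
            (limit_mul _ _ _ _ _ _ (limit_free (fun _ => g x) _ x x) Hk)).
  intros y [_ Hyx]. unfold slope. field. lra.
Qed.

Lemma le_of_locally_nondecreasing (g : R -> R) a b : a <= b ->
  (forall x, a <= x <= b -> exists del, 0 < del /\
     forall y, a <= y <= b -> Rabs (y - x) < del ->
       (x <= y -> g x <= g y) /\ (y <= x -> g y <= g x)) ->
  g a <= g b.
Proof.
  intros Hab Hloc.
  set (S x := a <= x <= b /\ g a <= g x).
  destruct (completeness S) as [s [Hub Hlub]].
  { exists b. intros x [Hx _]. lra. }
  { exists a. split; lra. }
  assert (Has : a <= s) by (apply Hub; split; lra).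
  assert (Hsb : s <= b) by (apply Hlub; intros x [Hx _]; lra).
  destruct (Hloc s (conj Has Hsb)) as [del [Hdel Hnear]].
  assert (HSs : S s).
  { destruct (classic (exists y, S y /\ s - del < y)) as [[y [[Hy Hay] Hys]] | Hno].
    - assert (y <= s) by (apply Hub; split; assumption).
      split; [lra|].
      apply (Rle_trans _ (g y)); [assumption|].
      apply Hnear; [lra | apply Rabs_def1 | ]; lra.
    - exfalso.
      assert (s <= s - del); [|lra].
      apply Hlub. intros x Sx.
      apply Rnot_lt_le. intro Hx. apply Hno. exists x. split; assumption. }
  destruct (Req_dec s b) as [<- | Hsb'].
  - apply HSs.
  - set (y := Rmin (s + del / 2) b).
    assert (Hsy : s < y) by (apply Rmin_glb_lt; lra).
    assert (Hyb : y <= b) by apply Rmin_r.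
    assert (Hyd : y <= s + del / 2) by apply Rmin_l.
    assert (HSy : S y).
    { split; [lra|]. apply (Rle_trans _ (g s)); [apply HSs|].
      apply Hnear; [lra | apply Rabs_def1 | ]; lra. }
    specialize (Hub y HSy). lra.
Qed.

Lemma has_deriv_on01_pos_locally_increasing g x d a b :
  0 < a -> b <= 1 -> a <= x <= b -> has_deriv_on01 g x d -> 0 < d ->
  exists del, 0 < del /\
    forall y, a <= y <= b -> Rabs (y - x) < del ->
      (x <= y -> g x <= g y) /\ (y <= x -> g y <= g x).
Proof.
  intros Ha Hb Hx Hg Hd.
  destruct (Hg d Hd) as [del [Hdel Hslope]].
  exists del. split; [assumption|].
  intros y Hy Hyd.
  destruct (Req_dec y x) as [-> | Hyx]; [lra|].
  specialize (Hslope y ltac:(lra) Hyx Hyd).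
  apply Rabs_def2 in Hslope.
  set (q := (g y - g x) / (y - x)) in Hslope.
  assert (Hgq : g y - g x = q * (y - x)) by (unfold q; field; lra).
  split; intro; nra.
Qed.

Lemma has_deriv_on01_nondecreasing g dg a b :
  0 < a -> a <= b -> b <= 1 ->
  (forall x, a <= x <= b -> has_deriv_on01 g x (dg x)) ->
  (forall x, a <= x <= b -> 0 <= dg x) ->
  g a <= g b.
Proof.
  intros Ha Hab Hb Hder Hdg.
  apply Rle_plus_epsilon. intros eps Heps.
  assert (Hshift : g a + eps * a <= g b + eps * b).
  { apply (le_of_locally_nondecreasing (fun y => g y + eps * y)); [assumption|].
    intros x Hx.
    apply (has_deriv_on01_pos_locally_increasing (fun y => g y + eps * y) x
             (dg x + (0 * x + eps * 1)) a b); try assumption;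
      [|specialize (Hdg x Hx); lra].
    apply has_deriv_on01_plus; [now apply Hder|].
    apply has_deriv_on01_mul; [apply has_deriv_on01_const | apply has_deriv_on01_id]. }
  nra.
Qed.

Section ParetoFront.

Variables f fd finv : R -> R.
Hypothesis Hf : pareto_front f fd finv.

Lemma front_nonincreasing a b : 0 < a -> a <= b -> b <= 1 -> f b <= f a.
Proof.
  destruct Hf as [Hder [Hneg _]]. intros Ha Hab Hb.
  apply Ropp_le_cancel.
  apply (has_deriv_on01_nondecreasing (fun y => - f y) (fun y => - fd y)); try assumption.
  - intros x Hx. apply has_deriv_on01_opp, Hder. lra.
  - intros x Hx. assert (fd x < 0) by (apply Hneg; lra). lra.
Qed.

Lemma mul_front_nondecreasing a b : 0 < a -> a <= b -> b <= 1 -> 0 < f b ->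
  a * f a <= b * f b.
Proof.
  destruct Hf as [Hder [_ [_ [_ Heff]]]]. intros Ha Hab Hb Hfb.
  apply (has_deriv_on01_nondecreasing (fun y => y * f y) (fun y => 1 * f y + y * fd y));
    try assumption.
  - intros x Hx. apply has_deriv_on01_mul; [apply has_deriv_on01_id | apply Hder; lra].
  - intros x Hx.
    assert (Hfx : 0 < f x)
      by (apply (Rlt_le_trans _ (f b)); [|apply front_nonincreasing]; lra).
    assert (Hn : - x * fd x / f x <= 1) by (apply Heff; lra).
    apply Rmult_le_compat_r with (r := f x) in Hn; [|lra].
    unfold Rdiv in Hn. rewrite Rmult_assoc, Rinv_l in Hn; lra.
Qed.

Lemma finv_nonincreasing y1 y2 : f 1 <= y1 -> y1 <= y2 -> finv y2 <= finv y1.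
Proof.
  destruct Hf as [_ [_ [_ [Hinv _]]]]. intros H1 H12.
  destruct (Hinv y1 H1) as [HV1 Hf1]. destruct (Hinv y2 ltac:(lra)) as [HV2 Hf2].
  apply Rnot_lt_le. intro Hlt.
  assert (f (finv y2) <= f (finv y1)) by (apply front_nonincreasing; lra).
  assert (y1 = y2) as -> by lra. lra.
Qed.

Lemma mul_finv_nonincreasing y1 y2 : 0 < y1 -> f 1 <= y1 -> y1 <= y2 ->
  y2 * finv y2 <= y1 * finv y1.
Proof.
  destruct Hf as [_ [_ [_ [Hinv _]]]]. intros Hy1 H1 H12.
  destruct (Hinv y1 H1) as [HV1 Hf1]. destruct (Hinv y2 ltac:(lra)) as [HV2 Hf2].
  assert (Hle : finv y2 * f (finv y2) <= finv y1 * f (finv y1)).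
  { apply mul_front_nondecreasing; try lra. now apply finv_nonincreasing. }
  rewrite Hf1, Hf2 in Hle. lra.
Qed.

Lemma mul_finv_le_of_ratio_le rho1 rho2 y1 y2 :
  0 <= rho1 -> 0 < y2 -> f 1 <= y2 -> y2 <= y1 -> rho1 / y1 <= rho2 / y2 ->
  rho1 * finv y1 <= rho2 * finv y2.
Proof.
  destruct Hf as [_ [_ [_ [Hinv _]]]]. intros Hr1 Hy2 H2 H21 Hratio.
  assert (HV2 := proj1 (proj1 (Hinv y2 H2))).
  assert (Hy := mul_finv_nonincreasing y2 y1 Hy2 H2 H21).
  replace rho1 with (rho1 / y1 * y1) by (field; lra).
  replace rho2 with (rho2 / y2 * y2) by (field; lra).
  assert (0 <= rho1 / y1)
    by (unfold Rdiv; apply Rmult_le_pos; [lra | apply Rlt_le, Rinv_0_lt_compat; lra]).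
  rewrite !Rmult_assoc.
  apply (Rle_trans _ (rho1 / y1 * (y2 * finv y2))).
  - now apply Rmult_le_compat_l.
  - apply Rmult_le_compat_r; [|assumption]. apply Rmult_le_pos; lra.
Qed.

End ParetoFront.

Lemma lt_of_ratio_le rho1 rho2 E1 E2 : 0 < E1 -> 0 < E2 -> 0 <= rho2 ->
  rho1 / E1 <= rho2 / E2 -> rho2 < rho1 -> E2 < E1.
Proof.
  intros HE1 HE2 Hr2 Hratio Hlt.
  assert (Hcross : rho1 * E2 <= rho2 * E1).
  { replace (rho1 * E2) with (rho1 / E1 * (E1 * E2)) by (field; lra).
    replace (rho2 * E1) with (rho2 / E2 * (E1 * E2)) by (field; lra).
    apply Rmult_le_compat_r; nra. }
  nra.
Qed.

Theorem proposition1
  (f fd finv : R -> R) (Hf : pareto_front f fd finv)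
  (Phi : list (R * R))
  (HPhi : forall m, In m Phi -> 0 < fst m /\ 0 < snd m)
  (L h t F dmax : R)
  (HL : 0 < L) (Hh : 0 < h) (Ht : 0 < t) (HF : 0 < F) (Hd : 0 < dmax)
  (Hfeas : forall m, In m Phi -> f 1 <= t * fst m * dmax / F)
  (E1 rho1 : R) (H1in : In (E1, rho1) Phi)
  (H1min : forall m, In m Phi -> rho1 / E1 <= snd m / fst m)
  (E2 rho2 : R) (H2in : In (E2, rho2) Phi)
  (H2opt : forall m, In m Phi -> m <> (E2, rho2) ->
     min_mass finv L h t F dmax E2 rho2 < min_mass finv L h t F dmax (fst m) (snd m)) :
  rho1 <= rho2.
Proof.
  destruct (HPhi _ H1in) as [HE1 Hr1]. destruct (HPhi _ H2in) as [HE2 Hr2].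
  specialize (H1min _ H2in). specialize (Hfeas _ H2in). simpl in *.
  apply Rnot_lt_le. intro Hlt.
  assert (Hmass := H2opt _ H1in ltac:(intros [= _ ->]; lra)).
  unfold min_mass in Hmass; simpl in Hmass.
  set (c := t * dmax / F).
  assert (Hc : 0 < c) by (unfold c; apply Rdiv_lt_0_compat; nra).
  assert (Hscale : forall E, t * E * dmax / F = c * E) by (intro; unfold c; field; lra).
  rewrite (Hscale E1), (Hscale E2) in Hmass. rewrite Hscale in Hfeas.
  assert (HE : E2 < E1) by (apply (lt_of_ratio_le rho1 rho2); lra).
  assert (Hindex : rho1 * finv (c * E1) <= rho2 * finv (c * E2)).
  { apply (mul_finv_le_of_ratio_le f fd finv Hf); [lra | nra | assumption | nra |].
    replace (rho1 / (c * E1)) with (rho1 / E1 / c) by (field; lra).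
    replace (rho2 / (c * E2)) with (rho2 / E2 / c) by (field; lra).
    apply Rmult_le_compat_r; [apply Rlt_le, Rinv_0_lt_compat|]; assumption. }
  apply Rmult_le_compat_l with (r := L * h * t) in Hindex;
    [|repeat apply Rmult_le_pos; lra].
  rewrite <- !Rmult_assoc in Hindex. lra.
Qed.
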